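(* For every integer $m\ge3$, $\mathrm{sn}(\mathrm{SUD}_m)=\underline{\mathrm{lcs}}(\mathrm{SUD}_m)=m^4-3m^2+3m$.
   Context: $\mathrm{SUD}_m$ is the hypergraph whose vertex set is the $m^2\times m^2$ grid $[m^2]\times[m^2]$ and whose $3m^2$ hyperedges are the $m^2$ rows, the $m^2$ columns, and the $m^2$ disjoint $m\times m$ blocks (the sets $\{(a,b): \lceil a/m\rceil=i,\lceil b/m\rceil=j\}$ for $i,j\in[m]$). A (weak) colouring of a hypergraph with $k$ colours is a map from its vertex set to $[k]$ such that no hyperedge is monochromatic; $\chi$ is the least $k$ for which such a colouring exists (here $\chi(\mathrm{SUD}_m)=2$). For a $\chi$-colouring $c$, a vertex set $S$ is a determining set if no other $\chi$-colouring agrees with $c$ on $S$; a critical set is an inclusion-minimal determining set. $\mathrm{scs}(H,c)$ and $\mathrm{lcs}(H,c)$ are the sizes of a smallest resp. largest critical set for $(H,c)$; $\mathrm{sn}(H)=\min_c\mathrm{scs}(H,c)$ and $\underline{\mathrm{lcs}}(H)=\min_c\mathrm{lcs}(H,c)$, minima over all $\chi(H)$-colourings $c$. *)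

From mathcomp Require Import all_boot.
Set Implicit Arguments. Unset Strict Implicit. Unset Printing Implicit Defensive.

Section Hyper.
Variables (V : finType) (E : {set {set V}}).

Definition colouring (k : nat) := {ffun V -> 'I_k}.

Definition proper k (c : colouring k) : bool :=
  [forall e in E, ~~ [forall x in e, forall y in e, c x == c y]].

(* chromatic number: least k admitting a proper k-colouring
   (bounded search; default #|V|.+1 if none exists) *)
Definition chi : nat :=
  \big[minn/#|V|.+1]_(k < #|V|.+2 | [exists c : colouring k, proper c]) (k : nat).

Definition determining k (c : colouring k) (S : {set V}) : bool :=
  [forall c' : colouring k, proper c' ==> [forall x in S, c' x == c x] ==> (c' == c)].

Definition critical k (c : colouring k) (S : {set V}) : bool :=
  determining c S && [forall S' : {set V}, (S' \proper S) ==> ~~ determining c S'].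

Definition scs k (c : colouring k) : nat :=
  \big[minn/#|V|]_(S : {set V} | critical c S) #|S|.
Definition lcs k (c : colouring k) : nat :=
  \max_(S : {set V} | critical c S) #|S|.

Definition sn : nat :=
  \big[minn/#|V|]_(c : colouring chi | proper c) scs c.
Definition lcs_min : nat :=
  \big[minn/#|V|]_(c : colouring chi | proper c) lcs c.
End Hyper.

(* The Sudoku hypergraph SUD_m on the (m^2 x m^2) grid, 0-indexed. *)
Definition SUD_V (m : nat) : finType := ('I_(m ^ 2) * 'I_(m ^ 2))%type.

Definition SUD_E (m : nat) : {set {set SUD_V m}} :=
  [set [set x : SUD_V m | x.1 == i] | i : 'I_(m ^ 2)] :|:
  [set [set x : SUD_V m | x.2 == j] | j : 'I_(m ^ 2)] :|:
  [set [set x : SUD_V m | (x.1 %/ m == p.1) && (x.2 %/ m == p.2)]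
     | p : ('I_m * 'I_m)%type].

From Pilot Require Import Defs.
From mathcomp Require Import all_boot all_order zify.
Set Implicit Arguments. Unset Strict Implicit. Unset Printing Implicit Defensive.
Import Order.TTheory.

(* For a 2-colouring c, a vertex v owns a hyperedge e if v is the only vertex of e
   with colour c v. Recolouring a vertex that owns nothing keeps the colouring proper,
   so every determining set contains all non-owners; conversely, when all owners have
   the same colour the non-owners already determine c and form its only critical set.
   Hence both invariants equal m^4 minus the largest possible number of owners.
   In SUD_m a row (or column) and a block of the same band share m >= 3 cells, so
   owners of the two have the same colour. Thus a block meeting an owned row, or lying
   in a band whose rows are all owned, has no fresh owner (one owning neither its row
   nor its column), and counting band by band bounds the owners by 3m^2 - 3m. Equality
   holds for the colouring marking the corner of every off-diagonal block and the first
   row and column, minus their common corner, of every diagonal block: its owners are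
   exactly the marked cells. *)

Lemma bigminn_le_cond (I : finType) (P : pred I) (F : I -> nat) x j :
  P j -> \big[minn/x]_(i | P i) F i <= F j.
Proof. by move=> Pj; have := bigmin_le_cond x F Pj; rewrite minEnat leEnat. Qed.

Lemma bigminn_geq (I : finType) (P : pred I) (F : I -> nat) x n :
  n <= x -> (forall i, P i -> n <= F i) -> n <= \big[minn/x]_(i | P i) F i.
Proof. by move=> nx nF; apply: (big_ind (leq n)) => // a b; rewrite leq_min => ->. Qed.

Lemma card_fibres (T I : finType) (f : T -> I) (P : pred T) :
  #|[set x | P x]| = \sum_(a : I) #|[set x | (f x == a) && P x]|.
Proof.
rewrite -sum1_card (partition_big f predT) //=; apply: eq_bigr => a _.
by rewrite -sum1_card; apply: eq_bigl => x; rewrite !inE andbC.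
Qed.

Lemma card_set_predC (T : finType) (P : pred T) :
  #|[set x | ~~ P x]| = #|T| - #|[set x | P x]|.
Proof. by rewrite -(cardsC [set x | P x]) addKn; apply: eq_card => x; rewrite !inE. Qed.

Lemma exists_avoid2 (T : finType) (A : {set T}) (v w : T) :
  2 < #|A| -> exists z, [/\ z \in A, z != v & z != w].
Proof.
move=> A3; have : 0 < #|A :\: [set v; w]|.
  by rewrite cardsD; have := subset_leq_card (subsetIr A [set v; w]); rewrite cards2; lia.
by case/card_gt0P => z; rewrite !inE negb_or => /andP [/andP [zv zw] zA]; exists z.
Qed.

Lemma ord2_eq (a b k : 'I_2) : k != a -> k != b -> a = b.
Proof. by case: a b k => [[|[|?]] ?] [[|[|?]] ?] [[|[|?]] ?] //= *; apply/val_inj. Qed.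

Section Colourings.
Variables (V : finType) (E : {set {set V}}).

Lemma determiningT k (c : colouring V k) : determining E c setT.
Proof.
apply/forallP => c'; apply/implyP => _; apply/implyP => /forall_inP agree.
by apply/eqP/ffunP => x; apply/eqP/agree; rewrite inE.
Qed.

Lemma criticalP k (c : colouring V k) S :
  reflect (determining E c S /\ forall S', determining E c S' -> S' \subset S -> S' = S)
          (critical E c S).
Proof.
apply: (iffP andP) => -[dS minS]; split=> //.
  move=> S' dS' sub; apply/eqP; rewrite eqEproper sub /=.
  by apply: contraL dS' => ltS; move/forallP/(_ S')/implyP: minS; apply.
apply/forallP => S'; apply/implyP => ltS; apply/negP => dS'.
by move: (ltS); rewrite (minS S' dS' (proper_sub ltS)) properxx.
Qed.

Lemma exists_critical k (c : colouring V k) : exists S, critical E c S.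
Proof.
have [S /minsetP [dS minS]] := ex_minset (ex_intro _ setT (determiningT c)).
by exists S; apply/criticalP.
Qed.

Lemma proper_colours_gt1 k (c : colouring V k) e : e \in E -> Defs.proper E c -> 1 < k.
Proof.
move=> eE /forall_inP/(_ e eE)/negP not_mono; rewrite ltnNge; apply/negP => k1.
apply: not_mono; apply/forall_inP => x _; apply/forall_inP => y _; apply/eqP/ord_inj.
by move: (ltn_ord (c x)) (ltn_ord (c y)); lia.
Qed.

Lemma chi_eq2 (c : colouring V 2) e : e \in E -> Defs.proper E c -> chi E = 2.
Proof.
move=> eE pc; have [x _] : exists x, x \in e.
  move/forall_inP/(_ e eE): pc; rewrite negb_forall_in => /exists_inP [x xe _].
  by exists x.
have V2 : 2 < #|V|.+2 by rewrite ltnS; apply/card_gt0P; exists x.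
apply/eqP; rewrite eqn_leq; apply/andP; split.
  apply: (@bigminn_le_cond _ _ (fun k : 'I_#|V|.+2 => val k) _ (Ordinal V2)).
  by apply/existsP; exists c; exact pc.
apply: bigminn_geq => [|k /existsP [c' pc']]; last exact: proper_colours_gt1 eE pc'.
by rewrite ltnS; apply/card_gt0P; exists x.
Qed.

Lemma sn_lcs_min_eq k (c0 : colouring V k) B :
  chi E = k -> Defs.proper E c0 ->
  (forall c : colouring V k, Defs.proper E c -> forall S, determining E c S -> B <= #|S|) ->
  (forall S, critical E c0 S -> #|S| <= B) ->
  sn E = B /\ lcs_min E = B.
Proof.
move=> chiE pc0 low up; rewrite /sn /lcs_min chiE.
have BV : B <= #|V| by rewrite -cardsT; exact: low _ pc0 _ (determiningT c0).
have low_crit (c : colouring V k) S : Defs.proper E c -> critical E c S -> B <= #|S|.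
  by move=> pc /criticalP [dS _]; exact: low _ pc _ dS.
have [S0 cS0] := exists_critical c0.
split; apply/eqP; rewrite eqn_leq; apply/andP; split.
- apply: leq_trans (bigminn_le_cond _ _ pc0) _.
  exact: leq_trans (bigminn_le_cond _ _ cS0) (up _ cS0).
- by apply: bigminn_geq => // c pc; apply: bigminn_geq => // S; apply: low_crit.
- by apply: leq_trans (bigminn_le_cond _ _ pc0) _; apply/bigmax_leqP.
- apply: bigminn_geq => // c pc; have [S cS] := exists_critical c.
  exact: leq_trans (low_crit _ _ pc cS) (leq_bigmax_cond _ cS).
Qed.

Section TwoColourings.
Implicit Types (c : colouring V 2) (v w : V) (e f S : {set V}).

Definition owns c v e : bool := (v \in e) && [forall w in e, (c w == c v) ==> (w == v)].

Definition owners c : {set V} := [set v | [exists e in E, owns c v e]].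

Lemma ownsP c v e :
  reflect (v \in e /\ forall w, w \in e -> c w = c v -> w = v) (owns c v e).
Proof.
apply: (iffP andP) => -[ve H]; split=> //.
  by move=> w we cw; apply/eqP; move/forall_inP/(_ w we)/implyP: H; apply; apply/eqP.
by apply/forall_inP => w we; apply/implyP => /eqP/(H w we)/eqP.
Qed.

Lemma owns_colour_eq c v w e f :
  owns c v e -> owns c w f -> 2 < #|e :&: f| -> c v = c w.
Proof.
move=> /ownsP [_ Hv] /ownsP [_ Hw] /(exists_avoid2 v w) [z [/setIP [ze zf] zv zw]].
apply: (@ord2_eq _ _ (c z)).
- by apply: contra zv => /eqP czv; apply/eqP; apply: Hv.
- by apply: contra zw => /eqP czw; apply/eqP; apply: Hw.
Qed.

Lemma owns_inj c v w e : owns c v e -> owns c w e -> 2 < #|e| -> v = w.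
Proof.
move=> ov ow e3; have cvw : c v = c w by apply: owns_colour_eq ov ow _; rewrite setIid.
by case/ownsP: ov => _ Hv; case/ownsP: ow => we _; apply/esym/Hv.
Qed.

Definition recolour c v : colouring V 2 :=
  [ffun x => if x == v then (if c v == ord0 then ord_max else ord0) else c x].

Lemma recolour_neq c v : recolour c v v != c v.
Proof. by rewrite ffunE eqxx; case: (c v) => [[|[|?]] ?]. Qed.

Lemma proper_recolour c v :
  Defs.proper E c -> v \notin owners c -> Defs.proper E (recolour c v).
Proof.
move=> /forall_inP pc; rewrite inE negb_exists => /forallP vO.
apply/forall_inP => e eE; have {vO} := vO e; rewrite eE /= => nov.
have [ve|ve] := boolP (v \in e).
- have [w [we cw wv]] : exists w, [/\ w \in e, c w = c v & w != v].
    move: nov; rewrite /owns ve negb_forall => /existsP [w].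
    by rewrite negb_imply andbC negb_imply => /andP [/andP [/eqP ? ?] ?]; exists w.
  apply/negP => /forall_inP/(_ w we)/forall_inP/(_ v ve).
  by rewrite [recolour c v w]ffunE (negbTE wv) cw eq_sym (negbTE (recolour_neq c v)).
- apply: contra (pc e eE) => /forall_inP same; apply/forall_inP => x xe.
  apply/forall_inP => y ye; move/forall_inP/(_ y ye): (same x xe).
  have nv z : z \in e -> z == v = false by move=> ze; apply: contraNF ve => /eqP <-.
  by rewrite !ffunE !nv.
Qed.

Lemma determining_compl_owners c S :
  Defs.proper E c -> determining E c S -> ~: S \subset owners c.
Proof.
move=> pc /forallP dS; apply/subsetP => v; rewrite inE => vS; apply/negPn/negP => vO.
have : recolour c v == c.
  move/implyP/(_ (proper_recolour pc vO))/implyP: (dS (recolour c v)); apply.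
  apply/forall_inP => x xS; rewrite ffunE; case: (eqVneq x v) => [xv|//].
  by move: vS; rewrite -xv xS.
by move/eqP/ffunP/(_ v)/eqP; rewrite (negbTE (recolour_neq c v)).
Qed.

Lemma determining_nonowners c :
  {in owners c &, forall v w, c v = c w} -> determining E c (~: owners c).
Proof.
move=> mono; apply/forallP => c'; apply/implyP => /forall_inP pc'.
apply/implyP => /forall_inP agree; apply/eqP/ffunP => v.
have [vO|vO] := boolP (v \in owners c); last by apply/eqP/agree; rewrite inE.
have [// | ne] := eqVneq (c' v) (c v).
move: (vO); rewrite inE => /exists_inP [e eE /ownsP [_ Hv]].
have same w : w \in e -> c' w = c' v.
  move=> we; have [-> // | wv] := eqVneq w v.
  have cwv : c w != c v by apply: contra wv => /eqP /(Hv w we) ->.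
  have wO : w \notin owners c by apply: contra cwv => wO; apply/eqP/mono.
  have -> : c' w = c w by apply/eqP/agree; rewrite inE.
  by apply: (@ord2_eq _ _ (c v)); rewrite eq_sym.
case/negP: (pc' e eE); apply/forall_inP => x xe; apply/forall_inP => y ye.
by rewrite (same x xe) (same y ye).
Qed.

Lemma critical_nonowners c S :
  Defs.proper E c -> {in owners c &, forall v w, c v = c w} ->
  critical E c S -> S = ~: owners c.
Proof.
move=> pc mono /criticalP [dS minS]; apply/esym/minS; first exact: determining_nonowners.
by rewrite -setCS setCK determining_compl_owners.
Qed.

Lemma card_determining c S :
  Defs.proper E c -> determining E c S -> #|V| - #|owners c| <= #|S|.
Proof.
move=> pc dS; have := subset_leq_card (determining_compl_owners pc dS).
by rewrite -(cardsC S); lia.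
Qed.

End TwoColourings.

End Colourings.

Arguments ownsP {V c v e}.

Section Sudoku.
Variable m : nat.
Hypothesis m_gt2 : 2 < m.
Local Notation V := (SUD_V m).
Local Notation E := (SUD_E m).

Let m_gt0 : 0 < m. Proof. lia. Qed.

Definition coord (d : bool) (x : V) : 'I_(m ^ 2) := if d then x.2 else x.1.

Definition line d (i : 'I_(m ^ 2)) : {set V} := [set x | coord d x == i].

Definition blk (p : 'I_m * 'I_m) : {set V} :=
  [set x : V | (x.1 %/ m == p.1) && (x.2 %/ m == p.2)].

Definition pcoord d (p : 'I_m * 'I_m) : 'I_m := if d then p.2 else p.1.

Lemma band_lt (i : 'I_(m ^ 2)) : i %/ m < m.
Proof. by rewrite ltn_divLR // mulnn. Qed.

Lemma offset_lt (i : 'I_(m ^ 2)) : i %% m < m.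
Proof. exact: ltn_pmod. Qed.

Definition band i : 'I_m := Ordinal (band_lt i).
Definition offset i : 'I_m := Ordinal (offset_lt i).
Definition blk_of (x : V) : 'I_m * 'I_m := (band x.1, band x.2).

Lemma cell_lt (a t : 'I_m) : a * m + t < m ^ 2.
Proof. by have := ltn_ord a; have := ltn_ord t; rewrite expnS expn1; nia. Qed.

Definition cell a t : 'I_(m ^ 2) := Ordinal (cell_lt a t).

Lemma div_cell a t : cell a t %/ m = a.
Proof. by rewrite /= divnMDl // divn_small ?addn0. Qed.

Lemma mod_cell a t : cell a t %% m = t.
Proof. by rewrite /= modnMDl modn_small. Qed.

Lemma band_cell a t : band (cell a t) = a.
Proof. exact/val_inj/div_cell. Qed.

Lemma offset_cell a t : offset (cell a t) = t.
Proof. exact/val_inj/mod_cell. Qed.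

Lemma cell_band_offset i : cell (band i) (offset i) = i.
Proof. by apply/val_inj; rewrite /= -divn_eq. Qed.

Lemma cell_inj a : injective (cell a).
Proof. by move=> t t' /(congr1 offset); rewrite !offset_cell. Qed.

Definition pt d (i j : 'I_(m ^ 2)) : V := if d then (j, i) else (i, j).

Lemma coord_pt d i j : coord d (pt d i j) = i.
Proof. by case: d. Qed.

Lemma coordN_pt d i j : coord (~~ d) (pt d i j) = j.
Proof. by case: d. Qed.

Lemma coord_inj d x y : coord d x = coord d y -> coord (~~ d) x = coord (~~ d) y -> x = y.
Proof. by case: d; case: x y => [? ?] [? ?] /= -> ->. Qed.

Lemma pcoord_blk_of d x : pcoord d (blk_of x) = band (coord d x).
Proof. by case: d. Qed.

Lemma in_line d i x : (x \in line d i) = (coord d x == i).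
Proof. by rewrite inE. Qed.

Lemma in_blk p x : (x \in blk p) = (blk_of x == p).
Proof. by case: p => a b; rewrite inE xpair_eqE. Qed.

Lemma in_blkE d p x :
  (x \in blk p) = (band (coord d x) == pcoord d p) && (band (coord (~~ d) x) == pcoord (~~ d) p).
Proof. by rewrite in_blk; case: d; rewrite // andbC. Qed.

Lemma line_in d i : line d i \in E.
Proof. by case: d; rewrite !inE imset_f ?orbT. Qed.

Lemma blk_in p : blk p \in E.
Proof. by rewrite !inE imset_f ?orbT. Qed.

Lemma edgeP e : e \in E -> (exists d i, e = line d i) \/ (exists p, e = blk p).
Proof.
rewrite !inE => /orP [/orP [] | ] /imsetP [x _ ->]; last by right; exists x.
  by left; exists false, x.
by left; exists true, x.
Qed.

Lemma card_line_blk d i p : band i = pcoord d p -> m <= #|line d i :&: blk p|.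
Proof.
move=> ip; pose f t := pt d i (cell (pcoord (~~ d) p) t).
have f_inj : injective f by move=> t t' /(congr1 (coord (~~ d))); rewrite !coordN_pt => /cell_inj.
rewrite -{1}(card_ord m) -(card_imset _ f_inj) subset_leq_card //.
apply/subsetP => _ /imsetP [t _ ->]; rewrite inE in_line coord_pt eqxx (in_blkE d).
by rewrite coord_pt coordN_pt band_cell ip !eqxx.
Qed.

Lemma line_gt2 d i : 2 < #|line d i|.
Proof.
have ip : band i = pcoord d (band i, band i) by case: d.
exact: leq_trans m_gt2 (leq_trans (card_line_blk ip) (subset_leq_card (subsetIl _ _))).
Qed.

Lemma blk_gt2 p : 2 < #|blk p|.
Proof.
have ip : band (cell p.1 (Ordinal m_gt0)) = pcoord false p by rewrite band_cell.
exact: leq_trans m_gt2 (leq_trans (card_line_blk ip) (subset_leq_card (subsetIr _ _))).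
Qed.

Lemma card_band a : #|[set i | band i == a]| = m.
Proof.
have -> : [set i | band i == a] = cell a @: setT.
  apply/setP => i; rewrite inE; apply/eqP/imsetP => [<- | [t _ ->]]; last exact: band_cell.
  by exists (offset i); rewrite ?cell_band_offset.
by rewrite card_imset ?cardsT ?card_ord //; apply: cell_inj.
Qed.

Lemma card_pcoord d a : #|[set p | pcoord d p == a]| = m.
Proof.
have -> : [set p | pcoord d p == a] = if d then setX setT [set a] else setX [set a] setT.
  by apply/setP => -[x y]; case: d; rewrite !inE ?andbT.
by case: d; rewrite cardsX cards1 cardsT card_ord ?muln1 ?mul1n.
Qed.

Section OwnersBound.
Variable c : colouring V 2.

Definition owned_line d i : bool := [exists v, owns c v (line d i)].

Definition fresh v : bool := [forall d, ~~ owns c v (line d (coord d v))].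

Definition fresh_owned p : bool := [exists v, owns c v (blk p) && fresh v].

Lemma owns_line_blk_not_fresh d i p v w :
  owns c v (line d i) -> owns c w (blk p) -> band i = pcoord d p ->
  (v \in blk p) || (w \in line d i) -> ~~ fresh w.
Proof.
move=> ov ow ip vw_in.
have cvw : c v = c w by apply: owns_colour_eq ov ow _; apply: leq_trans (card_line_blk ip).
have wv : w = v.
  case/orP: vw_in => [vb | wl]; first by case/ownsP: ow => _ /(_ v vb cvw).
  by case/ownsP: ov => _ /(_ w wl (esym cvw)).
rewrite negb_forall; apply/existsP; exists d; rewrite negbK wv.
by case/ownsP: (ov) => vl _; move: vl; rewrite in_line => /eqP ->.
Qed.

Lemma not_fresh_owned_of_line d i v : owns c v (line d i) -> ~~ fresh_owned (blk_of v).
Proof.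
move=> ov; have /ownsP [vl _] := ov; move: (vl); rewrite in_line => /eqP vi.
apply/negP => /existsP [w /andP [ow]]; apply/negP.
by apply: (owns_line_blk_not_fresh ov ow); rewrite ?pcoord_blk_of ?vi ?in_blk ?eqxx.
Qed.

Lemma not_fresh_owned_of_band d p :
  (forall i, band i = pcoord d p -> owned_line d i) -> ~~ fresh_owned p.
Proof.
move=> all_owned; apply/negP => /existsP [w /andP [ow]]; apply/negP.
have /ownsP [wb _] := ow; move: wb; rewrite (in_blkE d) => /andP [/eqP wp _].
have /existsP [v ov] := all_owned _ wp.
by apply: (owns_line_blk_not_fresh ov ow wp); rewrite in_line eqxx orbT.
Qed.

Lemma band_ineq d a :
  3 <= 2 * #|[set i | (band i == a) && ~~ owned_line d i]|
       + #|[set p | (pcoord d p == a) && ~~ fresh_owned p]|.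
Proof.
set U := [set i | _ && _]; set L := [set p | _ && _].
have [/existsP [i /andP [/eqP ia /existsP [v ov]]] | none] :=
  boolP [exists i, (band i == a) && owned_line d i]; last first.
  suff -> : U = [set i | band i == a] by rewrite card_band; lia.
  apply/setP => i; rewrite !inE; case: eqP => //= ia; move: none; apply: contra => own.
  by apply/existsP; exists i; rewrite ia eqxx.
have [U0 | U_pos] := posnP #|U|.
  suff -> : L = [set p | pcoord d p == a] by rewrite card_pcoord; lia.
  apply/setP => p; rewrite !inE; case: eqP => //= pa.
  apply: (@not_fresh_owned_of_band d) => j jp; apply: contraT => nown.
  by have := card0_eq U0 j; rewrite /U !inE jp pa eqxx nown.
suff : 0 < #|L| by lia.
have /ownsP [vi _] := ov; rewrite in_line in vi.
apply/card_gt0P; exists (blk_of v).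
by rewrite inE pcoord_blk_of (eqP vi) ia eqxx (not_fresh_owned_of_line ov).
Qed.

Lemma lines_ineq d :
  3 * m <= 2 * #|[set i | ~~ owned_line d i]| + #|[set p | ~~ fresh_owned p]|.
Proof.
rewrite (card_fibres band) (card_fibres (pcoord d)) big_distrr -big_split /=.
have -> : 3 * m = \sum_(a < m) 3 by rewrite sum_nat_const card_ord mulnC.
by apply: leq_sum => a _; apply: band_ineq.
Qed.

Definition line_owners d : {set V} := [set v | owns c v (line d (coord d v))].

Definition fresh_blk_owners : {set V} := [set v | owns c v (blk (blk_of v)) && fresh v].

Lemma owners_sub :
  owners E c \subset line_owners false :|: line_owners true :|: fresh_blk_owners.
Proof.
apply/subsetP => v; rewrite inE => /exists_inP [e eE ov]; rewrite !inE.
have [fv | ] := boolP (fresh v); last first.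
  by rewrite negb_forall => /existsP [[] /negbNE ->]; rewrite ?orbT.
have /ownsP [ve _] := ov; case: (edgeP eE) => [[d [i ei]] | [p ep]]; subst e.
  by move/forallP/(_ d): fv; move: ve; rewrite in_line => /eqP ->; rewrite ov.
by move: ve; rewrite in_blk => /eqP pv; rewrite pv ov !orbT.
Qed.

Lemma card_line_owners d : #|line_owners d| <= #|[set i | owned_line d i]|.
Proof.
rewrite -(card_in_imset (f := coord d)); last first.
  move=> v w; rewrite !inE => ov ow vw; rewrite vw in ov.
  exact: owns_inj ov ow (line_gt2 _ _).
apply/subset_leq_card/subsetP => _ /imsetP [v ov ->].
by rewrite inE; apply/existsP; exists v; rewrite inE in ov.
Qed.

Lemma card_fresh_blk_owners : #|fresh_blk_owners| <= #|[set p | fresh_owned p]|.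
Proof.
rewrite -(card_in_imset (f := blk_of)); last first.
  move=> v w; rewrite !inE => /andP [ov _] /andP [ow _] vw; rewrite vw in ov.
  exact: owns_inj ov ow (blk_gt2 _).
apply/subset_leq_card/subsetP => _ /imsetP [v ov ->].
by rewrite inE; apply/existsP; exists v; rewrite inE in ov.
Qed.

Lemma card_owners_le : #|owners E c| <= 3 * m ^ 2 - 3 * m.
Proof.
have ineq d : 3 * m <= 2 * (m ^ 2 - #|[set i | owned_line d i]|)
                       + (m ^ 2 - #|[set p | fresh_owned p]|).
  have := lines_ineq d; rewrite (card_set_predC (owned_line d)).
  by rewrite (card_set_predC fresh_owned) card_prod !card_ord mulnn.
have bound (T : finType) (A : {set T}) : #|A| <= #|T| by apply: max_card.
have := bound _ [set i | owned_line false i]; have := bound _ [set i | owned_line true i].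
have := bound _ [set p | fresh_owned p]; rewrite card_prod !card_ord mulnn.
have := ineq false; have := ineq true.
have := subset_leq_card owners_sub; rewrite !cardsU.
have := card_line_owners false; have := card_line_owners true.
have := card_fresh_blk_owners; lia.
Qed.

End OwnersBound.

Definition lead (i : nat) : bool := i %% m == 0.

Definition mark (i j : nat) : bool :=
  if i %/ m == j %/ m then lead i != lead j else lead i && lead j.

Definition marked (x : V) : bool := mark x.1 x.2.

Definition mark_colouring : colouring V 2 :=
  [ffun x => if marked x then ord_max else ord0].

Lemma mark_colouring_eq x y :
  (mark_colouring x == mark_colouring y) = (marked x == marked y).
Proof. by rewrite !ffunE; case: (marked x); case: (marked y). Qed.

Lemma markedE d x : marked x = mark (coord d x) (coord (~~ d) x).
Proof.
by case: d; rewrite /marked /mark //= [_ %/ m == _]eq_sym [lead _ == _]eq_sym andbC.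
Qed.

Lemma lead_cell a t : lead (cell a t) = (t == 0 :> nat).
Proof. by rewrite /lead mod_cell. Qed.

Lemma mark_cellr i b t :
  mark i (cell b t) = if i %/ m == b then lead i != (t == 0 :> nat) else lead i && (t == 0 :> nat).
Proof. by rewrite /mark lead_cell div_cell. Qed.

Lemma lead_inj i j : i %/ m = j %/ m -> lead i -> lead j -> i = j.
Proof. by move=> ij /eqP ri /eqP rj; rewrite (divn_eq i m) (divn_eq j m) ij ri rj. Qed.

Lemma mark_cell a r b t :
  mark (cell a r) (cell b t) =
  if a == b then (r == 0 :> nat) != (t == 0 :> nat) else (r == 0 :> nat) && (t == 0 :> nat).
Proof. by rewrite mark_cellr div_cell lead_cell. Qed.

Lemma edge_marked e : e \in E -> exists2 z, z \in e & marked z.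
Proof.
have m_gt1 : 1 < m by lia.
case/edgeP => [[d [i ->]] | [p ->]].
  pose t : 'I_m := if lead i then Ordinal m_gt1 else Ordinal m_gt0.
  exists (pt d i (cell (band i) t)); first by rewrite in_line coord_pt.
  by rewrite (markedE d) coord_pt coordN_pt mark_cellr eqxx /t; case: (lead i).
pose t : 'I_m := if p.1 == p.2 then Ordinal m_gt1 else Ordinal m_gt0.
exists (cell p.1 (Ordinal m_gt0), cell p.2 t).
  by rewrite in_blk /blk_of !band_cell; case: p {t}.
by rewrite /marked mark_cell /t; case: (p.1 == p.2).
Qed.

Lemma edge_unmarked2 e :
  e \in E -> exists z1 z2, [/\ z1 \in e, z2 \in e, z1 != z2, ~~ marked z1 & ~~ marked z2].
Proof.
have m_gt1 : 1 < m by lia.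
pose o1 : 'I_m := Ordinal m_gt1; pose o2 : 'I_m := Ordinal m_gt2.
have o12 : o1 != o2 by [].
case/edgeP => [[d [i ->]] | [p ->]].
  pose b : 'I_m := if i %/ m == 0 then o1 else Ordinal m_gt0.
  have ib : (i %/ m == b) = false by rewrite /b; case: (eqVneq (i %/ m) 0) => [-> | /negbTE].
  exists (pt d i (cell b o1)), (pt d i (cell b o2)).
  rewrite !in_line !coord_pt !(markedE d) !coord_pt !coordN_pt !mark_cellr ib !andbF.
  split=> //; apply: contra o12 => /eqP/(congr1 (coord (~~ d))).
  by rewrite !coordN_pt => /cell_inj ->.
exists (cell p.1 o1, cell p.2 o1), (cell p.1 o1, cell p.2 o2).
rewrite !in_blk /blk_of !band_cell -surjective_pairing /marked !mark_cell /=.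
split; rewrite ?if_same //.
by rewrite xpair_eqE eqxx (inj_eq (@cell_inj _)).
Qed.

Lemma mark_colouring_proper : Defs.proper E mark_colouring.
Proof.
apply/forall_inP => e eE; have [z ze mz] := edge_marked eE.
have [z1 [_ [z1e _ _ nm1 _]]] := edge_unmarked2 eE.
apply/negP => /forall_inP/(_ z ze)/forall_inP/(_ z1 z1e).
by rewrite mark_colouring_eq mz (negbTE nm1).
Qed.

Lemma owners_marked v : v \in owners E mark_colouring -> marked v.
Proof.
rewrite inE => /exists_inP [e eE /ownsP [_ Hv]]; apply: contraT => nmv.
have [z1 [z2 [z1e z2e z12 nm1 nm2]]] := edge_unmarked2 eE.
have same z : ~~ marked z -> mark_colouring z = mark_colouring v.
  by move=> nmz; apply/eqP; rewrite mark_colouring_eq (negbTE nmz) (negbTE nmv).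
by rewrite (Hv z1 z1e (same _ nm1)) (Hv z2 z2e (same _ nm2)) eqxx in z12.
Qed.

Lemma marked_eq v w :
  marked v -> mark_colouring w = mark_colouring v -> marked w.
Proof. by move=> mv /eqP; rewrite mark_colouring_eq mv => /eqP. Qed.

Lemma lead_owns_line d v :
  coord d v %/ m = coord (~~ d) v %/ m -> lead (coord d v) -> ~~ lead (coord (~~ d) v) ->
  owns mark_colouring v (line (~~ d) (coord (~~ d) v)).
Proof.
move=> diag ld nld; have mv : marked v by rewrite (markedE d) /mark diag eqxx ld (negbTE nld).
apply/ownsP; split=> [|w]; first by rewrite in_line.
rewrite in_line => /eqP wv /(marked_eq mv); rewrite (markedE d) wv /mark.
case: eqP => [band_eq | _]; last by rewrite (negbTE nld) andbF.
rewrite (negbTE nld) eqbF_neg negbK => lw; apply: coord_inj wv.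
by apply/val_inj/lead_inj; rewrite // band_eq diag.
Qed.

Lemma corner_owns_blk (v : V) :
  v.1 %/ m != v.2 %/ m -> lead v.1 -> lead v.2 -> owns mark_colouring v (blk (blk_of v)).
Proof.
move=> offdiag l1 l2; have mv : marked v by rewrite /marked /mark (negbTE offdiag) l1 l2.
apply/ownsP; split=> [|w]; first by rewrite in_blk.
rewrite inE => /andP [/eqP w1 /eqP w2] /(marked_eq mv).
rewrite /marked /mark w1 w2 (negbTE offdiag) => /andP [lw1 lw2].
by apply: (@coord_inj false); apply/val_inj/lead_inj.
Qed.

Lemma marked_owners v : marked v -> v \in owners E mark_colouring.
Proof.
rewrite inE /marked /mark => mv; apply/exists_inP.
have [diag | offdiag] := eqVneq (v.1 %/ m) (v.2 %/ m); last first.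
  exists (blk (blk_of v)); first exact: blk_in.
  by move: mv; rewrite (negbTE offdiag) => /andP [l1 l2]; apply: corner_owns_blk.
move: mv; rewrite diag eqxx; case l1: (lead v.1) => /= l2.
  by exists (line true v.2); [apply: line_in | apply: (@lead_owns_line false)].
exists (line false v.1); first exact: line_in.
by apply: (@lead_owns_line true); rewrite /= ?l1 //; case: (lead v.2) l2.
Qed.

Lemma sum_cells (F : 'I_(m ^ 2) -> nat) :
  \sum_i F i = \sum_(a < m) \sum_(t < m) F (cell a t).
Proof.
rewrite pair_big (reindex (fun q : 'I_m * 'I_m => cell q.1 q.2)) //=.
exists (fun i => (band i, offset i)) => [[a t] _ | i _];
  by rewrite /= ?band_cell ?offset_cell ?cell_band_offset.
Qed.

Lemma sum_pick (k : nat) x y :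
  k < m -> \sum_(t < m) (if k == t :> nat then x else y) = x + (m - 1) * y.
Proof.
move=> km; rewrite (bigD1 (Ordinal km)) //= eqxx; congr (_ + _).
rewrite (eq_bigr (fun _ => y)) => [|t tk]; last by rewrite ifN // eq_sym.
by rewrite sum_nat_const cardC1 card_ord subn1 mulnC.
Qed.

Lemma sum_mark_block a b r :
  \sum_(t < m) (mark (cell a r) (cell b t) : nat) =
  if a == b then (if r == 0 :> nat then m - 1 else 1) else (r == 0 :> nat).
Proof.
rewrite (eq_bigr (fun t : 'I_m => if 0 == t :> nat
    then (if a == b then r != 0 :> nat else r == 0 :> nat) : nat
    else (if a == b then r == 0 :> nat else false))) => [|t _]; last first.
  rewrite mark_cell [0 == _]eq_sym.
  by case: (t == 0 :> nat); case: (a == b); case: (r == 0 :> nat).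
by rewrite sum_pick //; case: (a == b); case: (r == 0 :> nat) => /=; lia.
Qed.

Lemma sum_mark_row a r :
  \sum_(j < m ^ 2) (mark (cell a r) j : nat) = if r == 0 :> nat then 2 * (m - 1) else 1.
Proof.
rewrite sum_cells (eq_bigr _ (fun b _ => sum_mark_block a b r)) (sum_pick _ _ (ltn_ord a)).
by case: (r == 0 :> nat) => /=; lia.
Qed.

Lemma card_marked : #|[set v | marked v]| = 3 * m ^ 2 - 3 * m.
Proof.
transitivity (\sum_(i < m ^ 2) \sum_(j < m ^ 2) (mark i j : nat)).
  rewrite -sum1_card big_mkcond /= pair_bigA.
  by apply: eq_bigr => -[i j] _; rewrite inE /marked; case: mark.
transitivity (\sum_(a < m) \sum_(r < m) (if 0 == r :> nat then 2 * (m - 1) else 1)).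
  by rewrite sum_cells; apply: eq_bigr => a _; apply: eq_bigr => r _; rewrite sum_mark_row eq_sym.
by rewrite (eq_bigr _ (fun a _ => sum_pick _ _ m_gt0)) sum_nat_const card_ord -mulnn; nia.
Qed.

Lemma owners_mark_colouring : owners E mark_colouring = [set v | marked v].
Proof.
by apply/setP => v; rewrite inE; apply/idP/idP; [apply: owners_marked | apply: marked_owners].
Qed.

Lemma mark_colouring_owners_mono :
  {in owners E mark_colouring &, forall v w, mark_colouring v = mark_colouring w}.
Proof. by move=> v w; rewrite owners_mark_colouring !inE !ffunE => -> ->. Qed.

Lemma card_SUD_V : #|V| = m ^ 4.
Proof. by rewrite card_prod card_ord -expnD. Qed.

End Sudoku.

Theorem proposition7 (m : nat) : 3 <= m ->
  sn (SUD_E m) = m ^ 4 - 3 * m ^ 2 + 3 * m /\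
  lcs_min (SUD_E m) = m ^ 4 - 3 * m ^ 2 + 3 * m.
Proof.
move=> m_gt2; have pc := mark_colouring_proper m_gt2.
have [le1 le2] : 3 * m <= 3 * m ^ 2 /\ 3 * m ^ 2 <= m ^ 4.
  by rewrite (_ : 4 = 2 + 2) // expnD -!mulnn; split; nia.
have m_gt0 : 0 < m by lia.
apply: (sn_lcs_min_eq (chi_eq2 (blk_in (Ordinal m_gt0, Ordinal m_gt0)) pc) pc).
- move=> c pc' S dS; have := card_determining pc' dS.
  by have := card_owners_le m_gt2 c; rewrite card_SUD_V; lia.
- move=> S /(critical_nonowners pc (mark_colouring_owners_mono m_gt2)) ->.
  rewrite owners_mark_colouring //; have := cardsC [set v : SUD_V m | marked v].
  by rewrite card_marked // card_SUD_V; lia.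
Qed.
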